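(* Let $G$ be a finite nilpotent group. If $H$ is a finite group with $C(G)\cong C(H)$ and $|G|=|H|$, then $H$ is nilpotent.
   Context: All groups are finite. For a group $X$, let $\mathrm{Cyc}(X)=\{x\in X : \langle x,y\rangle \text{ is cyclic for all } y\in X\}$. The cyclic graph $C(X)$ is the simple graph with vertex set $X\setminus \mathrm{Cyc}(X)$ in which two distinct vertices $x,y$ are adjacent iff $\langle x,y\rangle$ is cyclic. *)

From mathcomp Require Import all_boot all_fingroup all_solvable.
Set Implicit Arguments. Unset Strict Implicit. Unset Printing Implicit Defensive.
Local Open Scope group_scope.

Definition Cyc (gT : finGroupType) (X : {set gT}) : {set gT} :=
  [set x in X | [forall y in X, cyclic <<[set x; y]>>]].

Definition cyc_vertices (gT : finGroupType) (X : {set gT}) : {set gT} :=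
  X :\: Cyc X.

Definition cyc_adj (gT : finGroupType) (x y : gT) : bool :=
  (x != y) && cyclic <<[set x; y]>>.

Definition cyclic_graph_iso (gT hT : finGroupType) (G : {set gT}) (H : {set hT}) : Prop :=
  exists f : gT -> hT,
    [/\ {in cyc_vertices G &, injective f},
        f @: cyc_vertices G = cyc_vertices H &
        {in cyc_vertices G &, forall x y, cyc_adj x y = cyc_adj (f x) (f y)}].

From mathcomp Require Import all_boot all_fingroup all_solvable.
Set Implicit Arguments. Unset Strict Implicit. Unset Printing Implicit Defensive.
Local Open Scope group_scope.

(* For x in a group X, the set cyc_dom x of the y whose cyclic neighbourhood
   {z | <y, z> cyclic} contains that of x is the intersection of the maximal
   cyclic subgroups through x; being cyclic, it contains exactly
   #|cyc_dom x|_p p-elements.  It consists of Cyc X = cyc_dom 1 together with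
   the up-set of x for the vicinal preorder of C(X) (inclusion of closed
   neighbourhoods), which a graph isomorphism f : C(G) -> C(H) transports.
   When |G| = |H| the sets Cyc G and Cyc H have the same size, so for every
   vertex x the up-set of x in C(G) and that of f x in C(H) contain equally
   many p-elements.  An induction over up-closed sets of vertices then shows
   that C(G) and C(H) contain equally many p-elements, hence H has exactly
   |H|_p p-elements for every prime p: its Sylow subgroups are normal and H is
   nilpotent. *)

Lemma sum_nat_of_bool (T : finType) (A : {pred T}) (P : pred T) :
  \sum_(x in A) P x = #|[set x in A | P x]|.
Proof.
rewrite -sum1_card big_mkcond [RHS]big_mkcond; apply: eq_bigr => x _.
by rewrite inE; case: (x \in A); case: (P x).
Qed.

Section PeltCount.
Variable gT : finGroupType.
Implicit Types (K : {group gT}) (pi : nat_pred).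

Lemma sum_pelt_nil K pi : nilpotent K -> \sum_(y in K) pi.-elt y = (#|K|`_pi)%N.
Proof.
move=> nilK; have hallO := nilpotent_pcore_Hall pi nilK.
rewrite sum_nat_of_bool -(card_Hall hallO); apply: eq_card => y; rewrite inE.
have [Ky | notKy] := boolP (y \in K).
  by rewrite (mem_normal_Hall hallO) ?pcore_normal.
by apply/esym/negbTE; apply: contra notKy; apply: (subsetP (pcore_sub _ _)).
Qed.

Lemma nil_of_sum_pelt K :
  (forall p : nat, prime p -> \sum_(y in K) p.-elt y = (#|K|`_p)%N) -> nilpotent K.
Proof.
move=> sum_pelt; apply: (nilpotentS _ (Fitting_nil K)).
rewrite -{1}(Sylow_gen K) gen_subG; apply/bigcupsP => P /SylowP[p p_pr sylP].
have Sylow_pelt (Q : {group gT}) : p.-Sylow(K) Q -> Q :=: [set y in K | p.-elt y].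
  move=> sylQ; apply/eqP; rewrite eqEcard -sum_nat_of_bool sum_pelt //.
  rewrite (card_Hall sylQ) leqnn andbT; apply/subsetP => y Qy.
  by rewrite inE (subsetP (pHall_sub sylQ)) // (mem_p_elt (pHall_pgroup sylQ)).
apply: Fitting_max (pgroup_nil (pHall_pgroup sylP)).
apply/normalP; split=> [|h Kh]; first exact: pHall_sub sylP.
by rewrite (Sylow_pelt (P :^ h)%G) ?pHallJ // (Sylow_pelt P).
Qed.

End PeltCount.

Section SumsOverUpsets.
Variables (T : finType) (le : rel T) (V : {set T}).
Hypotheses (le_refl : reflexive le) (le_trans : transitive le).
Variables (a b : T -> nat).
Hypothesis eq_sum_upset : {in V, forall x,
  \sum_(y in [set y in V | le x y]) a y = \sum_(y in [set y in V | le x y]) b y}.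

Definition upclosed (S : {set T}) := {in S & V, forall x y, le x y -> y \in S}.

Lemma eq_sum_upclosed (S : {set T}) : S \subset V -> upclosed S ->
  \sum_(y in S) a y = \sum_(y in S) b y.
Proof.
elim: {S}_.+1 {-2}S (ltnSn #|S|) => // n IH S leSn sSV upS.
have [-> | [x0 Sx0]] := set_0Vmem S; first by rewrite !big_set0.
pose up x := [set y in V | le x y].
have [x Sx max_x] : {x | x \in S & {in S, forall y, #|up y| <= #|up x|}}.
  by case: (arg_maxnP (fun y => #|up y|) Sx0) => x; exists x.
pose C := [set y in S | le y x].
have sCS : C \subset S by apply/subsetP => y; rewrite inE => /andP[].
have sup_xS : up x \subset S.
  by apply/subsetP => y; rewrite inE => /andP[Vy /upS]; apply.
(* By maximality of [#|up x|], whatever lies below [x] in [S] also lies above it. *)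
have sCup : C \subset up x.
  apply/subsetP => y; rewrite inE => /andP[Sy le_yx].
  have sup_xy : up x \subset up y.
    by apply/subsetP => z; rewrite !inE => /andP[-> /(le_trans le_yx)].
  have <- : up y = up x by apply/esym/eqP; rewrite eqEcard sup_xy max_x.
  by rewrite inE (subsetP sSV) ?le_refl.
have IHD (A : {set T}) : A \subset S -> upclosed A ->
    \sum_(y in A :\: C) a y = \sum_(y in A :\: C) b y.
  move=> sAS upA; apply: IH.
  - rewrite -ltnS (leq_trans _ leSn) // ltnS; apply: proper_card.
    apply/properP; split; first by rewrite (subset_trans (subsetDl _ _)).
    by exists x; rewrite // !inE Sx le_refl.
  - by rewrite (subset_trans (subsetDl _ _)) // (subset_trans sAS).
  move=> y z; rewrite !inE => /andP[Cy Ay] Vz le_yz; rewrite (upA y) // andbT.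
  apply: contra Cy => /andP[Sz le_zx].
  by rewrite (subsetP sAS) // (le_trans le_yz).
have sum_C : \sum_(y in C) a y = \sum_(y in C) b y.
  have upclosed_up : upclosed (up x).
    by move=> y z; rewrite !inE => /andP[_ le_xy] -> /(le_trans le_xy).
  have := eq_sum_upset (subsetP sSV x Sx).
  by rewrite [LHS](big_setID C) [RHS](big_setID C) (setIidPr sCup) IHD // => /addIn.
by rewrite [LHS](big_setID C) [RHS](big_setID C) (setIidPr sCS) sum_C IHD.
Qed.

Lemma eq_sum_of_upsets : \sum_(y in V) a y = \sum_(y in V) b y.
Proof. by apply: eq_sum_upclosed. Qed.

End SumsOverUpsets.

Lemma imset_subset_in (aT rT : finType) (h : aT -> rT) (D A B : {set aT}) :
  {in D &, injective h} -> A \subset D -> B \subset D ->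
  (h @: A \subset h @: B) = (A \subset B).
Proof.
move=> h_inj sAD sBD; apply/idP/idP => [sAB|]; last exact: imsetS.
apply/subsetP => a Aa; have /imsetP[b Bb eq_ab] := subsetP sAB _ (imset_f h Aa).
by rewrite (h_inj a b) //; [apply: (subsetP sAD) | apply: (subsetP sBD)].
Qed.

Section CyclicNeighbourhoods.
Variables (gT : finGroupType) (X : {group gT}).
Implicit Types (x y : gT) (M : {group gT}) (pi : nat_pred).

Definition cyc_nbr x := [set y in X | cyclic <<[set x; y]>>].
Definition cyc_dom x := [set y in X | cyc_nbr x \subset cyc_nbr y].
Definition maxcyclic M := [max M of C | cyclic C && (C \subset X)].

Lemma gen2_subG x y M : (<<[set x; y]>> \subset M) = (x \in M) && (y \in M).
Proof. by rewrite gen_subG subUset !sub1set. Qed.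

Lemma cyclic_gen2 x y M : cyclic M -> x \in M -> y \in M -> cyclic <<[set x; y]>>.
Proof. by move=> cM Mx My; apply: cyclicS cM; rewrite gen2_subG Mx. Qed.

Lemma maxcyclic_exists (C : {group gT}) :
  cyclic C -> C \subset X -> exists2 M, maxcyclic M & C \subset M.
Proof.
move=> cC sCX; have [|M] := @maxgroup_exists _ (fun C => cyclic C && (C \subset X)) C.
  by rewrite cC.
by exists M.
Qed.

Lemma maxcyclic_mem x : x \in X -> exists2 M, maxcyclic M & x \in M.
Proof.
move=> Xx; have [|M maxM sxM] := maxcyclic_exists (cycle_cyclic x).
  by rewrite cycle_subG.
by exists M; rewrite // -cycle_subG.
Qed.

Lemma cyc_dom_bigcap x : x \in X ->
  cyc_dom x = \bigcap_(M | maxcyclic M && (x \in M)) M.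
Proof.
move=> Xx; apply/setP => y; apply/idP/bigcapP => [|yM].
  rewrite inE => /andP[Xy sNxy] M /andP[maxM Mx].
  have /andP[cM sMX] := maxgroupp maxM; have [m defM] := cyclicP cM.
  have Mm : m \in M by rewrite defM cycle_id.
  have /(subsetP sNxy) : m \in cyc_nbr x by rewrite inE (subsetP sMX) ?(cyclic_gen2 cM).
  rewrite inE => /andP[_ c_ym].
  have -> : M :=: <<[set y; m]>>.
    apply/esym/(maxgroupP maxM).2; first by rewrite c_ym gen2_subG Xy (subsetP sMX).
    by rewrite defM cycle_subG mem_gen // !inE eqxx orbT.
  by rewrite mem_gen // !inE eqxx.
have Xy : y \in X.
  have [M0 maxM0 M0x] := maxcyclic_mem Xx; have /andP[_ sM0X] := maxgroupp maxM0.
  by rewrite (subsetP sM0X) // yM // maxM0.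
rewrite inE Xy; apply/subsetP => w; rewrite !inE => /andP[Xw c_xw]; rewrite Xw.
have [|M maxM sxwM] := maxcyclic_exists c_xw; first by rewrite gen2_subG Xx.
have /andP[cM _] := maxgroupp maxM.
move: sxwM; rewrite gen2_subG => /andP[Mx Mw].
by apply: cyclic_gen2 cM _ Mw; rewrite yM // maxM.
Qed.

Lemma sum_pelt_cyc_dom x pi : x \in X ->
  \sum_(y in cyc_dom x) pi.-elt y = (#|cyc_dom x|`_pi)%N.
Proof.
move=> Xx; rewrite cyc_dom_bigcap //; apply: sum_pelt_nil.
apply/abelian_nil/cyclic_abelian.
have [M maxM Mx] := maxcyclic_mem Xx; have /andP[cM _] := maxgroupp maxM.
by apply: cyclicS cM; apply: bigcap_inf; rewrite maxM.
Qed.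

Lemma Cyc_sub : Cyc X \subset X.
Proof. by apply/subsetP => y; rewrite inE => /andP[]. Qed.

Lemma cyc_nbr1 : cyc_nbr 1 = X.
Proof.
apply/setP => y; rewrite inE andb_idr // => Xy.
exact: cyclic_gen2 (cycle_cyclic y) (group1 _) (cycle_id y).
Qed.

Lemma CycE : Cyc X = cyc_dom 1.
Proof.
apply/setP => y; rewrite !inE cyc_nbr1; congr (_ && _).
apply/forall_inP/subsetP => [c_y z Xz | sXNy z Xz]; first by rewrite inE Xz c_y.
by have := sXNy z Xz; rewrite inE => /andP[].
Qed.

Lemma sum_pelt_Cyc (A : {set gT}) pi : Cyc X \subset A ->
  \sum_(y in A) pi.-elt y = (#|Cyc X|`_pi + \sum_(y in A :\: Cyc X) pi.-elt y)%N.
Proof.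
move=> sCA; rewrite (big_setID (Cyc X)) (setIidPr sCA); congr addn.
by rewrite CycE sum_pelt_cyc_dom.
Qed.

Definition graph_nbr x := [set z in cyc_vertices X | (z == x) || cyc_adj x z].
Definition graph_up x := [set y in cyc_vertices X | graph_nbr x \subset graph_nbr y].

Lemma in_graph_nbr x z :
  (z \in graph_nbr x) = (z \in cyc_vertices X) && ((z == x) || cyc_adj x z).
Proof. by rewrite !inE. Qed.

Lemma in_graph_up x y :
  (y \in graph_up x) = (y \in cyc_vertices X) && (graph_nbr x \subset graph_nbr y).
Proof. by rewrite !inE. Qed.

Lemma graph_nbr_subV x : graph_nbr x \subset cyc_vertices X.
Proof. by apply/subsetP => z; rewrite in_graph_nbr => /andP[]. Qed.

Lemma graph_up_subV x : graph_up x \subset cyc_vertices X.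
Proof. by apply/subsetP => y; rewrite in_graph_up => /andP[]. Qed.

Lemma Cyc_sub_cyc_nbr x : x \in X -> Cyc X \subset cyc_nbr x.
Proof.
move=> Xx; apply/subsetP => y; rewrite !inE => /andP[-> /forall_inP c_y] /=.
by rewrite setUC c_y.
Qed.

Lemma graph_nbrE x : x \in X -> graph_nbr x = cyc_nbr x :\: Cyc X.
Proof.
move=> Xx; apply/setP => y; rewrite !inE -andbA; congr [&& _, _ & _].
rewrite /cyc_adj eq_sym; case: eqP => [-> | _] //=.
by rewrite (cyclic_gen2 (cycle_cyclic y) (cycle_id y) (cycle_id y)).
Qed.

Lemma sub_cyc_nbrE x y : x \in X -> y \in X ->
  (cyc_nbr x \subset cyc_nbr y) = (graph_nbr x \subset graph_nbr y).
Proof.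
move=> Xx Xy; rewrite !graph_nbrE //; apply/idP/idP => [/setSD // | sDxy].
apply/subsetP => z Nxz; have [Cz | nCz] := boolP (z \in Cyc X).
  exact: subsetP (Cyc_sub_cyc_nbr Xy) z Cz.
have /(subsetP sDxy) : z \in cyc_nbr x :\: Cyc X by rewrite in_setD nCz.
by rewrite in_setD => /andP[].
Qed.

Lemma cyc_nbr_Cyc y : y \in Cyc X -> cyc_nbr y = X.
Proof.
rewrite inE => /andP[_ /forall_inP c_y]; apply/setP => z.
by rewrite inE; apply/andb_idr/c_y.
Qed.

Lemma Cyc_sub_cyc_dom x : Cyc X \subset cyc_dom x.
Proof.
apply/subsetP => y Cy; rewrite inE (subsetP Cyc_sub y Cy) (cyc_nbr_Cyc Cy).
by apply/subsetP => z /setIdP[].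
Qed.

Lemma cyc_domD x : x \in X -> cyc_dom x :\: Cyc X = graph_up x.
Proof.
move=> Xx; apply/setP => y.
rewrite in_setD [y \in cyc_dom x]inE [y \in graph_up x]inE in_setD -andbA.
by case Xy: (y \in X); rewrite ?andbF //= sub_cyc_nbrE.
Qed.

Lemma card_cyc_vertices : #|X| = (#|Cyc X| + #|cyc_vertices X|)%N.
Proof. by rewrite -(cardsID (Cyc X) X) (setIidPr Cyc_sub). Qed.

Lemma sum_pelt_vertices pi :
  \sum_(y in X) pi.-elt y = (#|Cyc X|`_pi + \sum_(y in cyc_vertices X) pi.-elt y)%N.
Proof. exact: sum_pelt_Cyc Cyc_sub. Qed.

Lemma sum_pelt_graph_up x pi : x \in X ->
  (#|Cyc X|`_pi + \sum_(y in graph_up x) pi.-elt y = (#|Cyc X| + #|graph_up x|)`_pi)%N.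
Proof.
move=> Xx; rewrite -cyc_domD // -sum_pelt_Cyc ?Cyc_sub_cyc_dom // sum_pelt_cyc_dom //.
by rewrite -(cardsID (Cyc X) (cyc_dom x)) (setIidPr (Cyc_sub_cyc_dom x)).
Qed.

End CyclicNeighbourhoods.

Section CyclicGraphIsomorphism.
Variables (gT hT : finGroupType) (G : {group gT}) (H : {group hT}) (f : gT -> hT).
Hypotheses (f_inj : {in cyc_vertices G &, injective f})
  (f_onto : f @: cyc_vertices G = cyc_vertices H)
  (f_adj : {in cyc_vertices G &, forall x y, cyc_adj x y = cyc_adj (f x) (f y)}).

Lemma iso_imsetE (A : {set gT}) (B : {set hT}) :
  A \subset cyc_vertices G -> B \subset cyc_vertices H ->
  {in cyc_vertices G, forall w, (f w \in B) = (w \in A)} -> B = f @: A.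
Proof.
move=> sAV sBV fAB; apply/setP => z; apply/idP/imsetP => [Bz | [w Aw ->]].
  have /imsetP[w Vw def_z] : z \in f @: cyc_vertices G by rewrite f_onto (subsetP sBV).
  by exists w; rewrite // -fAB -?def_z.
by rewrite fAB // (subsetP sAV).
Qed.

Lemma graph_nbr_iso x : x \in cyc_vertices G ->
  graph_nbr H (f x) = f @: graph_nbr G x.
Proof.
move=> Vx; apply: iso_imsetE => [||w Vw]; rewrite ?graph_nbr_subV //.
rewrite !in_graph_nbr -f_adj // Vw (inj_in_eq f_inj) //.
by rewrite -f_onto imset_f.
Qed.

Lemma graph_up_iso x : x \in cyc_vertices G ->
  graph_up H (f x) = f @: graph_up G x.
Proof.
move=> Vx; apply: iso_imsetE => [||w Vw]; rewrite ?graph_up_subV //.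
rewrite !in_graph_up !graph_nbr_iso // (imset_subset_in f_inj) ?graph_nbr_subV //.
by rewrite Vw -f_onto imset_f.
Qed.

Lemma card_Cyc_iso : #|G| = #|H| -> #|Cyc H| = #|Cyc G|.
Proof.
move=> oGH; apply/eqP; rewrite -(eqn_add2r #|cyc_vertices H|) -card_cyc_vertices.
by rewrite -f_onto card_in_imset // -card_cyc_vertices oGH.
Qed.

Lemma sum_pelt_vertices_iso pi : #|G| = #|H| ->
  \sum_(y in cyc_vertices H) pi.-elt y = \sum_(y in cyc_vertices G) pi.-elt y.
Proof.
move=> oGH; rewrite -f_onto big_imset //; apply/esym.
apply: (@eq_sum_of_upsets _ (fun x y => graph_nbr G x \subset graph_nbr G y)).
- by move=> x; apply: subxx.
- by move=> y x z; apply: subset_trans.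
move=> x Vx; have Vfx : f x \in cyc_vertices H by rewrite -f_onto imset_f.
have f_inj_up := sub_in2 (subsetP (graph_up_subV G x)) f_inj.
apply/(@addnI (#|Cyc G|`_pi)%N).
rewrite sum_pelt_graph_up ?(subsetP (subsetDl _ _) x Vx) // -/(graph_up G x).
rewrite -(big_imset (fun y => nat_of_bool (pi.-elt y)) f_inj_up) -graph_up_iso //.
rewrite -(card_Cyc_iso oGH) sum_pelt_graph_up ?(subsetP (subsetDl _ _) _ Vfx) //.
by rewrite graph_up_iso // card_in_imset.
Qed.

End CyclicGraphIsomorphism.

Theorem corollary4 (gT hT : finGroupType) (G : {group gT}) (H : {group hT}) :
  nilpotent G -> cyclic_graph_iso G H -> #|G| = #|H| -> nilpotent H.
Proof.
move=> nilG [f [f_inj f_onto f_adj]] oGH; apply: nil_of_sum_pelt => p _.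
rewrite sum_pelt_vertices (card_Cyc_iso f_inj f_onto oGH).
rewrite (sum_pelt_vertices_iso f_inj f_onto f_adj _ oGH) -sum_pelt_vertices -oGH.
exact: sum_pelt_nil.
Qed.
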